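(* Let $(L,[\cdot,\cdot],\{\cdot,\cdot,\cdot\},\alpha)$ be a Hom-Lie-Yamaguti algebra over a field $\mathbb{K}$, and let $(f_t,g_t)$ and $(f_t',g_t')$, with $f_t=\sum_{i\ge0}f_it^i$, $g_t=\sum_{i\ge0}g_it^i$, $f_t'=\sum_{i\ge0}f_i't^i$, $g_t'=\sum_{i\ge0}g_i't^i$, be equivalent one-parameter formal deformations of it. Then $(f_1,g_1)$ and $(f_1',g_1')$ belong to the same cohomology class in $HomH^2(L,L)\times HomH^3(L,L)$; that is, $(f_1-f_1',g_1-g_1')\in HomB^2(L,L)\times HomB^3(L,L)$.
   Context: A Hom-Lie-Yamaguti algebra (HLYA) over a commutative ring $R$ (here $R=\mathbb{K}$ a field or $R=\mathbb{K}[[t]]$) is a quadruple $(L,[\cdot,\cdot],\{\cdot,\cdot,\cdot\},\alpha)$ where $L$ is an $R$-module, $[\cdot,\cdot]$ is an $R$-bilinear and $\{\cdot,\cdot,\cdot\}$ an $R$-trilinear operation on $L$ (written $[xy]$, $\{xyz\}$), and $\alpha:L\to L$ is $R$-linear, such that for all $x,y,z,u,v\in L$: $\alpha([xy])=[\alpha(x)\alpha(y)]$; $\alpha(\{xyz\})=\{\alpha(x)\alpha(y)\alpha(z)\}$; $[xx]=0$; $\{xxy\}=0$; $\circlearrowleft_{x,y,z}([[xy]\alpha(z)]+\{xyz\})=0$; $\circlearrowleft_{x,y,z}\{[xy]\alpha(z)\alpha(u)\}=0$; $\{\alpha(x)\alpha(y)[uv]\}=[\{xyu\}\alpha^2(v)]+[\alpha^2(u)\{xyv\}]$;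 $\{\alpha^2(u)\alpha^2(v)\{xyz\}\}=\{\{uvx\}\alpha^2(y)\alpha^2(z)\}+\{\alpha^2(x)\{uvy\}\alpha^2(z)\}+\{\alpha^2(x)\alpha^2(y)\{uvz\}\}$, where $\circlearrowleft_{x,y,z}$ denotes the sum over cyclic permutations of $x,y,z$. Cochains: for $n\ge1$, $HomC^n(L,L)$ is the set of $\mathbb{K}$-multilinear maps $f:L^n\to L$ with $f(x_1,\dots,x_n)=0$ whenever $x_{2i-1}=x_{2i}$ for some $i$, and $f(\alpha(x_1),\dots,\alpha(x_n))=\alpha(f(x_1,\dots,x_n))$. For $h\in HomC^1(L,L)$ put $\delta_I^1h(x,y)=[xh(y)]+[h(x)y]-h([xy])$ and $\delta_{II}^1h(x,y,z)=\{h(x)yz\}+\{xh(y)z\}+\{xyh(z)\}-h(\{xyz\})$. For $(f,g)\in HomC^2(L,L)\times HomC^3(L,L)$ put $\delta_I^2(f,g)(x,y,z,u)=\{\alpha(x)\alpha(y)f(z,u)\}-f(\{xyz\},\alpha^2(u))-f(\alpha^2(z),\{xyu\})+g(\alpha(x),\alpha(y),[zu])-[\alpha^2(z)g(x,y,u)]-[g(x,y,z)\alpha^2(u)]$, $\delta_{II}^2 g(x,y,u,v,w)=\{\alpha^2(x)\alpha^2(y)g(u,v,w)\}-\{g(x,y,u)\alpha^2(v)\alpha^2(w)\}-\{\alpha^2(u)g(x,y,v)\alpha^2(w)\}-\{\alpha^2(u)\alpha^2(v)g(x,y,w)\}+g(\alpha^2(x),\alpha^2(y),\{uvw\})-g(\{xyu\},\alpha^2(v),\alpha^2(w))-g(\alpha^2(u),\{xyv\},\alpha^2(w))-g(\alpha^2(u),\alpha^2(v),\{xyw\})$,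 $d_I^2(f,g)(x,y,z)=\circlearrowleft_{x,y,z}([f(x,y)\alpha(z)]+f([xy],\alpha(z))+g(x,y,z))$, $d_{II}^2(f,g)(x,y,z,u)=\circlearrowleft_{x,y,z}(\{f(x,y)\alpha(z)\alpha(u)\}+g([xy],\alpha(z),\alpha(u)))$. Then $HomZ^2(L,L)\times HomZ^3(L,L)$ is the set of $(f,g)\in HomC^2\times HomC^3$ with $\delta_I^2(f,g)=0$, $\delta_{II}^2g=0$, $d_I^2(f,g)=0$, $d_{II}^2(f,g)=0$; $HomB^2(L,L)\times HomB^3(L,L)=\{(\delta_I^1h,\delta_{II}^1h): h\in HomC^1(L,L)\}$ (contained in the former); and the second cohomology group is the quotient $HomH^2(L,L)\times HomH^3(L,L)=(HomZ^2\times HomZ^3)/(HomB^2\times HomB^3)$. Deformations: $\mathbb{K}$-multilinear maps on $L$ are extended $\mathbb{K}[[t]]$-multilinearly to $L[[t]]$, and $\alpha$ is extended $\mathbb{K}[[t]]$-linearly. A one-parameter formal deformation of $(L,[\cdot,\cdot],\{\cdot,\cdot,\cdot\},\alpha)$ is a pair $f_t=\sum_{i\ge0}f_it^i$, $g_t=\sum_{i\ge0}g_it^i$ with $f_0=[\cdot,\cdot]$, $g_0=\{\cdot,\cdot,\cdot\}$, each $f_i:L\times L\to L$ $\mathbb{K}$-bilinear and each $g_i:L^3\to L$ $\mathbb{K}$-trilinear, such that $(L[[t]],f_t,g_t,\alpha)$ is an HLYA over $\mathbb{K}[[t]]$. Two deformations $(f_t,g_t)$, $(f_t',g_t')$ are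 equivalent if there is a $\mathbb{K}[[t]]$-linear isomorphism $\Phi_t=\sum_{i\ge0}\phi_it^i:L[[t]]\to L[[t]]$ (each $\phi_i:L\to L$ $\mathbb{K}$-linear) with $\phi_0=\mathrm{id}_L$, $\Phi_t\circ\alpha=\alpha\circ\Phi_t$, $\Phi_t(f_t(x,y))=f_t'(\Phi_t(x),\Phi_t(y))$ and $\Phi_t(g_t(x,y,z))=g_t'(\Phi_t(x),\Phi_t(y),\Phi_t(z))$. *)

From HB Require Import structures.
From mathcomp Require Import all_boot all_order all_algebra.
Set Implicit Arguments. Unset Strict Implicit. Unset Printing Implicit Defensive.
Import GRing.Theory.
Local Open Scope ring_scope.

Definition linK (K : fieldType) (L : lmodType K) (h : L -> L) : Prop :=
  forall (a : K) (x y : L), h (a *: x + y) = a *: h x + h y.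

Definition bilinK (K : fieldType) (L : lmodType K) (f : L -> L -> L) : Prop :=
  (forall z, linK (fun x => f x z)) /\ (forall x, linK (f x)).

Definition trilinK (K : fieldType) (L : lmodType K) (g : L -> L -> L -> L) : Prop :=
  [/\ (forall y z, linK (fun x => g x y z)),
      (forall x z, linK (fun y => g x y z)) &
      (forall x y, linK (g x y))].

(* ---------- The HLYA identities, over an arbitrary carrier M with an
   addition and a zero (used both for L and for L[[t]]) ---------- *)
Definition cyc3 (M : Type) (add : M -> M -> M) (F : M -> M -> M -> M) (x y z : M) : M :=
  add (add (F x y z) (F y z x)) (F z x y).

Definition HLYA_identities (M : Type) (add : M -> M -> M) (zero : M)
  (br : M -> M -> M) (tri : M -> M -> M -> M) (al : M -> M) : Prop :=
       (forall x y, al (br x y) = br (al x) (al y)) /\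
      (forall x y z, al (tri x y z) = tri (al x) (al y) (al z)) /\
      (forall x, br x x = zero) /\
      (forall x y, tri x x y = zero) /\
      (forall x y z,
         cyc3 add (fun a b c => add (br (br a b) (al c)) (tri a b c)) x y z = zero) /\
      (forall x y z u,
         cyc3 add (fun a b c => tri (br a b) (al c) (al u)) x y z = zero) /\
      (forall x y u v,
         tri (al x) (al y) (br u v)
         = add (br (tri x y u) (al (al v))) (br (al (al u)) (tri x y v))) /\
      (forall x y z u v,
         tri (al (al u)) (al (al v)) (tri x y z)
         = add (add (tri (tri u v x) (al (al y)) (al (al z)))
                    (tri (al (al x)) (tri u v y) (al (al z))))
               (tri (al (al x)) (al (al y)) (tri u v z))).

Definition is_HLYA (K : fieldType) (L : lmodType K)
  (br : L -> L -> L) (tri : L -> L -> L -> L) (al : L -> L) : Prop :=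
  [/\ bilinK br, trilinK tri, linK al & HLYA_identities +%R 0 br tri al].

Definition ser (K : fieldType) (L : lmodType K) := nat -> L.

Definition sadd (K : fieldType) (L : lmodType K) (x y : ser L) : ser L :=
  fun n => x n + y n.
Definition szero (K : fieldType) (L : lmodType K) : ser L := fun _ => 0.

Definition salpha (K : fieldType) (L : lmodType K) (al : L -> L) (x : ser L) : ser L :=
  fun n => al (x n).

(* Phi_t = sum_i phi_i t^i applied to x in L[[t]] *)
Definition ext1 (K : fieldType) (L : lmodType K) (phi : nat -> L -> L) (x : ser L) : ser L :=
  fun n => \sum_(i < n.+1) phi i (x (n - i)%N).

(* f_t = sum_i f_i t^i, extended K[[t]]-bilinearly to L[[t]] *)
Definition ext2 (K : fieldType) (L : lmodType K) (f : nat -> L -> L -> L)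
  (x y : ser L) : ser L :=
  fun n => \sum_(i < n.+1) \sum_(j < (n - i).+1) f i (x j) (y (n - i - j)%N).

(* g_t = sum_i g_i t^i, extended K[[t]]-trilinearly to L[[t]] *)
Definition ext3 (K : fieldType) (L : lmodType K) (g : nat -> L -> L -> L -> L)
  (x y z : ser L) : ser L :=
  fun n => \sum_(i < n.+1) \sum_(j < (n - i).+1) \sum_(k < (n - i - j).+1)
             g i (x j) (y k) (z (n - i - j - k)%N).

Definition is_deformation (K : fieldType) (L : lmodType K)
  (br : L -> L -> L) (tri : L -> L -> L -> L) (al : L -> L)
  (f : nat -> L -> L -> L) (g : nat -> L -> L -> L -> L) : Prop :=
  [/\ (forall x y, f 0%N x y = br x y),
      (forall x y z, g 0%N x y z = tri x y z),
      (forall i, bilinK (f i)),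
      (forall i, trilinK (g i)) &
      HLYA_identities (@sadd K L) (@szero K L) (ext2 f) (ext3 g) (salpha al)].

Definition equiv_deformations (K : fieldType) (L : lmodType K) (al : L -> L)
  (f : nat -> L -> L -> L) (g : nat -> L -> L -> L -> L)
  (f' : nat -> L -> L -> L) (g' : nat -> L -> L -> L -> L) : Prop :=
  exists phi : nat -> L -> L,
      (forall x, phi 0%N x = x) /\
        (forall i, linK (phi i)) /\
        bijective (ext1 phi) /\
        (forall x n, ext1 phi (salpha al x) n = salpha al (ext1 phi x) n) /\
        (forall x y n, ext1 phi (ext2 f x y) n = ext2 f' (ext1 phi x) (ext1 phi y) n) /\
        (forall x y z n, ext1 phi (ext3 g x y z) n
                         = ext3 g' (ext1 phi x) (ext1 phi y) (ext1 phi z) n).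

Definition HomC1 (K : fieldType) (L : lmodType K) (al : L -> L) (h : L -> L) : Prop :=
  linK h /\ (forall x, h (al x) = al (h x)).

Definition deltaI1 (K : fieldType) (L : lmodType K) (br : L -> L -> L) (h : L -> L)
  (x y : L) : L :=
  br x (h y) + br (h x) y - h (br x y).

Definition deltaII1 (K : fieldType) (L : lmodType K) (tri : L -> L -> L -> L) (h : L -> L)
  (x y z : L) : L :=
  tri (h x) y z + tri x (h y) z + tri x y (h z) - h (tri x y z).

Definition HomB23 (K : fieldType) (L : lmodType K)
  (br : L -> L -> L) (tri : L -> L -> L -> L) (al : L -> L)
  (F : L -> L -> L) (G : L -> L -> L -> L) : Prop :=
  exists h : L -> L,
    [/\ HomC1 al h,
        (forall x y, F x y = deltaI1 br h x y) &
        (forall x y z, G x y z = deltaII1 tri h x y z)].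

(* Write the equivalence as Phi_t = id + t phi_1 + O(t^2) and evaluate the identities
   Phi_t o alpha = alpha o Phi_t, Phi_t (f_t x y) = f'_t (Phi_t x) (Phi_t y) and
   Phi_t (g_t x y z) = g'_t (Phi_t x) (Phi_t y) (Phi_t z) on constant series.  The
   coefficients of t^1 say that phi_1 commutes with alpha, that
   f_1 - f'_1 = delta_I^1 phi_1 and that g_1 - g'_1 = delta_II^1 phi_1. *)

From mathcomp Require Import all_boot all_order all_algebra.
Import GRing.Theory.
Local Open Scope ring_scope.

Lemma subr_transpose (V : zmodType) (x y z t : V) : x + y = z + t -> x - t = z - y.
Proof. by move=> e; apply/eqP; rewrite subr_eq addrAC -e addrK. Qed.

Section Linearity.
Context {K : fieldType} {L : lmodType K}.

Lemma linK0 (h : L -> L) : linK h -> h 0 = 0.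
Proof.
move=> hL; have := hL (-1) 0 0.
by rewrite scaleN1r oppr0 addr0 => ->; rewrite scaleN1r addNr.
Qed.

Lemma bilinK0l (f : L -> L -> L) y : bilinK f -> f 0 y = 0.
Proof. by case=> fL _; exact: (@linK0 (f^~ y)). Qed.

Lemma bilinK0r (f : L -> L -> L) x : bilinK f -> f x 0 = 0.
Proof. by case=> _ fL; exact: linK0. Qed.

Lemma trilinK0l (g : L -> L -> L -> L) y z : trilinK g -> g 0 y z = 0.
Proof. by case=> gL _ _; exact: (@linK0 (fun x => g x y z)). Qed.

Lemma trilinK0m (g : L -> L -> L -> L) x z : trilinK g -> g x 0 z = 0.
Proof. by case=> _ gL _; exact: (@linK0 (fun y => g x y z)). Qed.

Lemma trilinK0r (g : L -> L -> L -> L) x y : trilinK g -> g x y 0 = 0.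
Proof. by case=> _ _ gL; exact: linK0. Qed.

End Linearity.

Definition cst {K : fieldType} {L : lmodType K} (a : L) : ser L :=
  fun n => if n is 0%N then a else 0.

Section SeriesCoefficients.
Context {K : fieldType} {L : lmodType K}.

Lemma ext1_coef0 (phi : nat -> L -> L) x : ext1 phi x 0%N = phi 0%N (x 0%N).
Proof. by rewrite /ext1 big_ord1. Qed.

Lemma ext1_coef1 (phi : nat -> L -> L) x :
  ext1 phi x 1%N = phi 0%N (x 1%N) + phi 1%N (x 0%N).
Proof. by rewrite /ext1 !big_ord_recr big_ord0 /= add0r. Qed.

Lemma ext2_coef0 (f : nat -> L -> L -> L) x y : ext2 f x y 0%N = f 0%N (x 0%N) (y 0%N).
Proof. by rewrite /ext2 !big_ord1. Qed.

Lemma ext2_coef1 (f : nat -> L -> L -> L) x y :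
  ext2 f x y 1%N = f 0%N (x 0%N) (y 1%N) + f 0%N (x 1%N) (y 0%N) + f 1%N (x 0%N) (y 0%N).
Proof. by rewrite /ext2 !big_ord_recr !big_ord0 /= !add0r. Qed.

Lemma ext3_coef0 (g : nat -> L -> L -> L -> L) x y z :
  ext3 g x y z 0%N = g 0%N (x 0%N) (y 0%N) (z 0%N).
Proof. by rewrite /ext3 !big_ord1. Qed.

Lemma ext3_coef1 (g : nat -> L -> L -> L -> L) x y z :
  ext3 g x y z 1%N = g 0%N (x 0%N) (y 0%N) (z 1%N) + g 0%N (x 0%N) (y 1%N) (z 0%N)
                 + g 0%N (x 1%N) (y 0%N) (z 0%N) + g 1%N (x 0%N) (y 0%N) (z 0%N).
Proof. by rewrite /ext3 !big_ord_recr !big_ord0 /= !add0r. Qed.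

End SeriesCoefficients.

Section FirstOrderTerms.
Context {K : fieldType} {L : lmodType K}.
Variables (br : L -> L -> L) (tri : L -> L -> L -> L) (al : L -> L).
Variables (f f' : nat -> L -> L -> L) (g g' : nat -> L -> L -> L -> L).
Variable phi : nat -> L -> L.
Hypotheses (phi0 : forall x, phi 0%N x = x) (phiL : forall i, linK (phi i)).

Let phi_0 i : phi i 0 = 0. Proof. exact: linK0. Qed.

Lemma ext1_cst_coef0 a : ext1 phi (cst a) 0%N = a.
Proof. by rewrite ext1_coef0. Qed.

Lemma ext1_cst_coef1 a : ext1 phi (cst a) 1%N = phi 1%N a.
Proof. by rewrite ext1_coef1 /= phi_0 add0r. Qed.

Lemma first_order_alpha_comm :
  linK al ->
  (forall x n, ext1 phi (salpha al x) n = salpha al (ext1 phi x) n) ->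
  forall v, phi 1%N (al v) = al (phi 1%N v).
Proof.
move=> alL phi_al v; have := phi_al (cst v) 1%N.
by rewrite ext1_coef1 /salpha -/(ext1 phi (cst v) 1%N) ext1_cst_coef1 /= linK0 // phi_0 add0r.
Qed.

Lemma first_order_bracket :
  (forall x y, f 0%N x y = br x y) -> (forall x y, f' 0%N x y = br x y) ->
  (forall i, bilinK (f i)) ->
  (forall x y n, ext1 phi (ext2 f x y) n = ext2 f' (ext1 phi x) (ext1 phi y) n) ->
  forall a b, f 1%N a b - f' 1%N a b = deltaI1 br (phi 1%N) a b.
Proof.
move=> f0 f0' fL phi_f a b; have := phi_f (cst a) (cst b) 1%N.
rewrite ext1_coef1 ext2_coef1 ext2_coef0 phi0 ext2_coef1 /=.
rewrite !ext1_cst_coef0 !ext1_cst_coef1 (bilinK0r _ _ (fL 0%N)).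
by rewrite (bilinK0l _ _ (fL 0%N)) !add0r !f0 !f0'; apply: subr_transpose.
Qed.

Lemma first_order_ternary :
  (forall x y z, g 0%N x y z = tri x y z) -> (forall x y z, g' 0%N x y z = tri x y z) ->
  (forall i, trilinK (g i)) ->
  (forall x y z n, ext1 phi (ext3 g x y z) n
                   = ext3 g' (ext1 phi x) (ext1 phi y) (ext1 phi z) n) ->
  forall a b c, g 1%N a b c - g' 1%N a b c = deltaII1 tri (phi 1%N) a b c.
Proof.
move=> g0 g0' gL phi_g a b c; have := phi_g (cst a) (cst b) (cst c) 1%N.
rewrite ext1_coef1 ext3_coef1 ext3_coef0 phi0 ext3_coef1 /=.
rewrite !ext1_cst_coef0 !ext1_cst_coef1 (trilinK0r _ _ _ (gL 0%N)).
rewrite (trilinK0m _ _ _ (gL 0%N)) (trilinK0l _ _ _ (gL 0%N)) !add0r !g0 !g0'.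
move/subr_transpose => ->; rewrite /deltaII1; congr (_ - _).
by rewrite addrC [tri a b _ + _]addrC addrA.
Qed.

End FirstOrderTerms.

Theorem mainTheorem4 (K : fieldType) (L : lmodType K)
  (br : L -> L -> L) (tri : L -> L -> L -> L) (al : L -> L)
  (f : nat -> L -> L -> L) (g : nat -> L -> L -> L -> L)
  (f' : nat -> L -> L -> L) (g' : nat -> L -> L -> L -> L) :
  is_HLYA br tri al ->
  is_deformation br tri al f g ->
  is_deformation br tri al f' g' ->
  equiv_deformations al f g f' g' ->
  HomB23 br tri al (fun x y => f 1%N x y - f' 1%N x y)
                   (fun x y z => g 1%N x y z - g' 1%N x y z).
Proof.
case=> _ _ alL _ [f0 g0 fL gL _] [f0' g0' _ _ _].
case=> phi [phi0 [phiL [_ [phi_al [phi_f phi_g]]]]].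
exists (phi 1%N); split.
- by split; [exact: phiL | exact: first_order_alpha_comm].
- exact: first_order_bracket.
- exact: first_order_ternary.
Qed.
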